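(* Let $(W,\prec)$ be any $\mathsf{MN}$-frame. Then: (1) $\Box p \to \Box\Box p$ is valid in $(W,\prec)$ if and only if $(W,\prec)$ is transitive; (2) $\neg\Box\bot$ is valid in $(W,\prec)$ if and only if $(W,\prec)$ is an $\mathsf{MNP}$-frame; (3) $\neg(\Box p \land \Box\neg p)$ is valid in $(W,\prec)$ if and only if $(W,\prec)$ is an $\mathsf{MND}$-frame. Here $p$ is a propositional variable.
   Context: The modal language has countably many propositional variables, the constant $\bot$, the connective $\to$ and the operator $\Box$; $\top,\neg,\land,\lor,\Diamond$ are the usual abbreviations. An $\mathsf{MN}$-frame is a pair $(W,\prec)$ where $W$ is a non-empty set and $\prec$ is a binary relation between elements of $W$ and non-empty subsets of $W$ satisfying monotonicity: if $x\prec V$ and $V\subseteq U\subseteq W$ then $x\prec U$. An $\mathsf{MN}$-model is $(W,\prec,\Vdash)$ where $(W,\prec)$ is an $\mathsf{MN}$-frame and $\Vdash$ is a relation between $W$ and formulas satisfying the usual Boolean clauses and: $x\Vdash\Box A$ iff for every $V\subseteq W$ with $x\prec V$ there is $y\in V$ with $y\Vdash A$. A formula is valid in a frame if it is forced at every point under every such satisfaction relation on the frame. The frame is transitive if whenever $x\prec V$ and for each $y\in V$ there is $U_y\subseteq W$ with $y\prec U_y$, then $x\prec\bigcup_{y\in V}U_y$. It is an $\mathsf{MNP}$-frame if for every $x\in W$ there is $V\subseteq W$ with $x\prec V$. It is an $\mathsf{MND}$-frame if for every $x\in W$ and every $V\subseteq W$, $x\prec V$ or $x\prec (W\setminus V)$.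 *)

From Stdlib Require Import Classical.

Inductive form : Type :=
| Var : nat -> form
| Bot : form
| Imp : form -> form -> form
| Box : form -> form.

Definition Neg (A : form) : form := Imp A Bot.
Definition Top : form := Neg Bot.
Definition Or (A B : form) : form := Imp (Neg A) B.
Definition And (A B : form) : form := Neg (Imp A (Neg B)).

Definition subset {W : Type} (V U : W -> Prop) : Prop := forall x, V x -> U x.
Definition nonempty {W : Type} (V : W -> Prop) : Prop := exists y, V y.

Record MNframe : Type := {
  carrier :> Type;
  prec : carrier -> (carrier -> Prop) -> Prop;
  carrier_inhabited : exists x : carrier, True;
  prec_nonempty : forall x V, prec x V -> nonempty V;
  prec_mono : forall x (V U : carrier -> Prop), prec x V -> subset V U -> prec x U
}.

(* Forcing under a valuation of the propositional variables; the forcing relation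
   satisfying the usual clauses is uniquely determined by the valuation. *)
Fixpoint forces (F : MNframe) (val : nat -> F -> Prop) (x : F) (A : form) : Prop :=
  match A with
  | Var n => val n x
  | Bot => False
  | Imp A1 A2 => forces F val x A1 -> forces F val x A2
  | Box A1 => forall V : F -> Prop, prec F x V -> exists y, V y /\ forces F val y A1
  end.

Definition valid_in (F : MNframe) (A : form) : Prop :=
  forall (val : nat -> F -> Prop) (x : F), forces F val x A.

Definition transitive_frame (F : MNframe) : Prop :=
  forall (x : F) (V : F -> Prop) (U : F -> F -> Prop),
    prec F x V ->
    (forall y, V y -> prec F y (U y)) ->
    prec F x (fun z => exists y, V y /\ U y z).

Definition MNP_frame (F : MNframe) : Prop :=
  forall x : F, exists V : F -> Prop, prec F x V.

Definition MND_frame (F : MNframe) : Prop :=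
  forall (x : F) (V : F -> Prop), prec F x V \/ prec F x (fun z => ~ V z).

(* By monotonicity, x forces [Box A] exactly when x does not neighbour the
   complement of the truth set of A.  Classically every set is such a complement,
   so validity of each formula becomes a condition on prec over arbitrary sets:
   [Box p -> Box Box p] says that x prec {z | z prec Q} implies x prec Q, which is
   transitivity once Q is taken to be the union of the U_y; [~ Box Bot] says that
   x has some neighbourhood; and [~ (Box p /\ Box ~p)] says that x neighbours V or
   its complement. *)
From Stdlib Require Import Classical.

Section Neighbourhoods.

Variable F : MNframe.

Lemma prec_ext (x : F) (V U : F -> Prop) :
  (forall z, V z <-> U z) -> prec F x V <-> prec F x U.
Proof.
  intros HVU; split; intro H; apply (prec_mono F x _ _ H); intros z; apply HVU.
Qed.

Lemma prec_notnot (x : F) (P : F -> Prop) :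
  prec F x (fun z => ~ ~ P z) <-> prec F x P.
Proof.
  apply prec_ext; intro z; split; [apply NNPP | auto].
Qed.

Lemma meets_all_prec_iff (x : F) (P : F -> Prop) :
  (forall V, prec F x V -> exists y, V y /\ P y) <-> ~ prec F x (fun z => ~ P z).
Proof.
  split.
  - intros Hmeet Hx. destruct (Hmeet _ Hx) as [y [HnPy HPy]]. contradiction.
  - intros Hnx V HV. apply NNPP; intro Hdisj. apply Hnx.
    apply (prec_mono F x V); auto.
    intros z Hz HPz. apply Hdisj. exists z; auto.
Qed.

Definition nested_prec_elim : Prop :=
  forall (x : F) (Q : F -> Prop), prec F x (fun z => prec F z Q) -> prec F x Q.

Lemma transitive_frame_iff_nested_prec_elim :
  transitive_frame F <-> nested_prec_elim.
Proof.
  split.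
  - intros Htrans x Q Hx.
    apply (prec_mono F x _ _ (Htrans x _ (fun _ => Q) Hx (fun y Hy => Hy))).
    intros z [_ [_ Hz]]. exact Hz.
  - intros Helim x V U HV HU. apply Helim.
    apply (prec_mono F x V); auto.
    intros y Hy. apply (prec_mono F y (U y)); auto.
    intros z Hz. exists y; auto.
Qed.

End Neighbourhoods.

Section Forcing.

Variables (F : MNframe) (val : nat -> F -> Prop).

Lemma forces_Box_iff (x : F) (A : form) :
  forces F val x (Box A) <-> ~ prec F x (fun z => ~ forces F val z A).
Proof. apply meets_all_prec_iff. Qed.

Lemma forces_And_iff (x : F) (A B : form) :
  forces F val x (And A B) <-> forces F val x A /\ forces F val x B.
Proof.
  simpl; split.
  - intro H. apply NNPP; intro Hn. apply H. intros HA HB. auto.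
  - intros [HA HB] H. exact (H HA HB).
Qed.

Lemma forces_Box_imp_Box_Box_iff (x : F) (p : nat) :
  forces F val x (Imp (Box (Var p)) (Box (Box (Var p)))) <->
  (prec F x (fun z => prec F z (fun w => ~ val p w)) -> prec F x (fun w => ~ val p w)).
Proof.
  change (forces F val x (Imp (Box (Var p)) (Box (Box (Var p)))))
    with (forces F val x (Box (Var p)) -> forces F val x (Box (Box (Var p)))).
  rewrite (forces_Box_iff x (Box (Var p))), (forces_Box_iff x (Var p)).
  rewrite (prec_ext F x (fun z => ~ forces F val z (Box (Var p)))
                        (fun z => prec F z (fun w => ~ val p w))).
  2: { intro z. rewrite forces_Box_iff. split; [apply NNPP | auto]. }
  split.
  - intros H Hx. apply NNPP; intro Hn. exact (H Hn Hx).
  - intros H Hn Hx. exact (Hn (H Hx)).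
Qed.

Lemma forces_Neg_And_Box_Box_Neg_iff (x : F) (p : nat) :
  forces F val x (Neg (And (Box (Var p)) (Box (Neg (Var p))))) <->
  prec F x (fun z => ~ val p z) \/ prec F x (val p).
Proof.
  change (forces F val x (Neg (And (Box (Var p)) (Box (Neg (Var p))))))
    with (~ forces F val x (And (Box (Var p)) (Box (Neg (Var p))))).
  rewrite forces_And_iff, !forces_Box_iff.
  rewrite (prec_notnot F x (fun z => forces F val z (Var p))).
  split.
  - intro H. apply NNPP; intro Hn. apply H. split; intro Hx; apply Hn; auto.
  - intros [Hx | Hx] [Hn1 Hn2]; auto.
Qed.

End Forcing.

Lemma valid_Box_imp_Box_Box_iff (F : MNframe) (p : nat) :
  valid_in F (Imp (Box (Var p)) (Box (Box (Var p)))) <-> nested_prec_elim F.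
Proof.
  split.
  - intros Hval x Q HQ. apply (prec_notnot F x Q).
    apply (proj1 (forces_Box_imp_Box_Box_iff F (fun _ z => ~ Q z) x p) (Hval _ x)).
    apply (prec_mono F x _ _ HQ). intros z Hz. apply (prec_notnot F z Q), Hz.
  - intros Helim val x. apply forces_Box_imp_Box_Box_iff, Helim.
Qed.

Lemma valid_Neg_Box_Bot_iff (F : MNframe) :
  valid_in F (Neg (Box Bot)) <-> MNP_frame F.
Proof.
  split.
  - intros Hval x. apply NNPP; intro Hn. apply (Hval (fun _ _ => False) x).
    intros V HV. exfalso. apply Hn. exists V; exact HV.
  - intros Hmnp val x Hbox. destruct (Hmnp x) as [V HV].
    destruct (Hbox V HV) as [y [_ []]].
Qed.

Lemma valid_Neg_And_Box_Box_Neg_iff (F : MNframe) (p : nat) :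
  valid_in F (Neg (And (Box (Var p)) (Box (Neg (Var p))))) <-> MND_frame F.
Proof.
  split.
  - intros Hval x V. apply or_comm, (forces_Neg_And_Box_Box_Neg_iff F (fun _ => V) x p), Hval.
  - intros Hmnd val x. apply forces_Neg_And_Box_Box_Neg_iff, or_comm, Hmnd.
Qed.

Theorem proposition3p4 (F : MNframe) (p : nat) :
  (valid_in F (Imp (Box (Var p)) (Box (Box (Var p)))) <-> transitive_frame F) /\
  (valid_in F (Neg (Box Bot)) <-> MNP_frame F) /\
  (valid_in F (Neg (And (Box (Var p)) (Box (Neg (Var p))))) <-> MND_frame F).
Proof.
  split; [| split].
  - rewrite valid_Box_imp_Box_Box_iff. symmetry. apply transitive_frame_iff_nested_prec_elim.
  - apply valid_Neg_Box_Bot_iff.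
  - apply valid_Neg_And_Box_Box_Neg_iff.
Qed.
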